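(* Let $C_0\ge1$. There exists a constant $C_1=C_1(C_0)\ge1$ such that for all $x_1,x_2>0$ and $\kappa_1,\kappa_2\in(0,1)$ satisfying $$\frac{x_1}{x_2},\ \frac{\kappa_1}{\kappa_2},\ \frac{1-\kappa_1}{1-\kappa_2}\in\Big[\frac1{C_0},C_0\Big],$$ we have $$\frac1{C_1}\le\frac{H_{\kappa_1}(x_1)-1}{H_{\kappa_2}(x_2)-1}\le C_1.$$
   Context: For $\kappa\in(0,1)$ let $G_\kappa:[1,\infty)\to[0,\infty)$, $G_\kappa(x)=\sqrt{x^2-1}-\kappa\ln(x+\sqrt{x^2-1})$ (a strictly increasing bijection) and $H_\kappa=G_\kappa^{-1}:[0,\infty)\to[1,\infty)$. *)

From Stdlib Require Import Reals Lra ClassicalEpsilon.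
Open Scope R_scope.

Definition G (kappa x : R) : R :=
  sqrt (x ^ 2 - 1) - kappa * ln (x + sqrt (x ^ 2 - 1)).

(* H_kappa = G_kappa^{-1} : [0,oo) -> [1,oo): the (unique, since G_kappa is a
   strictly increasing bijection [1,oo) -> [0,oo) for kappa in (0,1))
   x >= 1 with G_kappa x = y, chosen by Hilbert's epsilon. *)
Definition H (kappa y : R) : R :=
  epsilon (inhabits 1) (fun x => 1 <= x /\ G kappa x = y).

From Stdlib Require Import Reals Lra ClassicalEpsilon.
From Coquelicot Require Import Coquelicot.
Open Scope R_scope.

(* C1 = 4 C0^4 works.  Substituting x = cosh u turns G_k into
   u |-> sinh u - k u = (1 - k) u + (sinh u - u), and H_k(y) - 1 into
   cosh u - 1.  With C = C0, if cosh u1 - 1 > 4 C^4 (cosh u2 - 1), then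
   sinh u1 > 2 C^2 u2 (because sinh^2 >= 2 (cosh - 1) and cosh u - 1 >= u^2 / 2),
   and, since (sinh u - u) / (cosh u - 1) is increasing,
   sinh u1 - u1 >= 4 C^4 (sinh u2 - u2).  Both parts of G_k1 at u1 then exceed
   C times the corresponding parts of G_k2 at u2, which is incompatible with
   x1 <= C x2 once 1 - k2 <= C (1 - k1). *)

Lemma is_derive_nonneg_le (f df : R -> R) (a b : R) : a <= b ->
  (forall x, a <= x <= b -> is_derive f x (df x)) ->
  (forall x, a <= x <= b -> 0 <= df x) -> f a <= f b.
Proof.
  intros Hab Hd Hpos.
  destruct (MVT_gen f a b df) as [c [Hc Hmvt]];
    rewrite ?Rmin_left, ?Rmax_right in * by lra.
  - intros x Hx. apply Hd. lra.
  - intros x Hx. apply derivable_continuous_pt. exists (df x).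
    apply is_derive_Reals, Hd. lra.
  - assert (0 <= df c * (b - a)) by (apply Rmult_le_pos; [apply Hpos |]; lra).
    lra.
Qed.

Lemma cosh_sqr_sub_sinh_sqr u : cosh u ^ 2 - sinh u ^ 2 = 1.
Proof. unfold cosh, sinh. rewrite exp_Ropp. field. apply exp_neq_0. Qed.

Lemma cosh_ge_1 u : 1 <= cosh u.
Proof.
  assert (0 < cosh u) by (unfold cosh; pose proof (exp_pos u); pose proof (exp_pos (- u)); lra).
  pose proof (cosh_sqr_sub_sinh_sqr u). nra.
Qed.

Lemma sinh_nonneg u : 0 <= u -> 0 <= sinh u.
Proof.
  intros [Hu | <-].
  - rewrite <- sinh_0. left. now apply sinh_lt.
  - rewrite sinh_0. lra.
Qed.

Lemma cosh_le u v : 0 <= u <= v -> cosh u <= cosh v.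
Proof.
  intros Huv. apply (is_derive_nonneg_le cosh sinh); try lra.
  - intros x _. auto_derive; [easy | ring].
  - intros x Hx. apply sinh_nonneg. lra.
Qed.

Lemma id_le_sinh u : 0 <= u -> u <= sinh u.
Proof.
  intros Hu.
  enough (sinh 0 - 0 <= sinh u - u) by (rewrite sinh_0 in *; lra).
  apply (is_derive_nonneg_le (fun t => sinh t - t) (fun t => cosh t - 1)); auto.
  - intros x _. auto_derive; [easy | ring].
  - intros x _. pose proof (cosh_ge_1 x). lra.
Qed.

Lemma sqr_div_2_le_cosh_sub_1 u : 0 <= u -> u ^ 2 / 2 <= cosh u - 1.
Proof.
  intros Hu.
  enough (cosh 0 - 1 - 0 ^ 2 / 2 <= cosh u - 1 - u ^ 2 / 2) by (rewrite cosh_0 in *; lra).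
  apply (is_derive_nonneg_le (fun t => cosh t - 1 - t ^ 2 / 2) (fun t => sinh t - t)); auto.
  - intros x _. auto_derive; [easy | field].
  - intros x Hx. pose proof (id_le_sinh x). lra.
Qed.

Lemma cosh_sub_1_pos u : 0 < u -> 0 < cosh u - 1.
Proof.
  intros Hu. pose proof (sqr_div_2_le_cosh_sub_1 u ltac:(lra)).
  assert (0 < u ^ 2) by (apply pow_lt; lra). lra.
Qed.

Lemma sinh_le_mul_cosh u : 0 <= u -> sinh u <= u * cosh u.
Proof.
  intros Hu.
  enough (0 * cosh 0 - sinh 0 <= u * cosh u - sinh u) by (rewrite sinh_0 in *; lra).
  apply (is_derive_nonneg_le (fun t => t * cosh t - sinh t) (fun t => t * sinh t)); auto.
  - intros x _. auto_derive; [easy | ring].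
  - intros x Hx. pose proof (sinh_nonneg x). nra.
Qed.

Lemma cosh_sub_1_le_mul_sinh u : 0 <= u -> 2 * (cosh u - 1) <= u * sinh u.
Proof.
  intros Hu.
  enough (0 * sinh 0 - 2 * (cosh 0 - 1) <= u * sinh u - 2 * (cosh u - 1))
    by (rewrite sinh_0, cosh_0 in *; lra).
  apply (is_derive_nonneg_le (fun t => t * sinh t - 2 * (cosh t - 1))
                             (fun t => t * cosh t - sinh t)); auto.
  - intros x _. auto_derive; [easy | ring].
  - intros x Hx. pose proof (sinh_le_mul_cosh x). lra.
Qed.

Lemma sinh_sub_id_div_cosh_sub_1_le u v : 0 < u <= v ->
  (sinh u - u) / (cosh u - 1) <= (sinh v - v) / (cosh v - 1).
Proof.
  intros Huv.
  apply (is_derive_nonneg_le (fun t => (sinh t - t) / (cosh t - 1))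
    (fun t => ((cosh t - 1) * (cosh t - 1) - (sinh t - t) * sinh t) / (cosh t - 1) ^ 2));
    try lra.
  - intros x Hx. pose proof (cosh_sub_1_pos x ltac:(lra)).
    auto_derive; [lra | field; lra].
  - (* by cosh^2 - sinh^2 = 1 the numerator equals x sinh x - 2 (cosh x - 1) *)
    intros x Hx. pose proof (cosh_sub_1_pos x ltac:(lra)).
    pose proof (cosh_sub_1_le_mul_sinh x ltac:(lra)).
    pose proof (cosh_sqr_sub_sinh_sqr x).
    apply Rdiv_le_0_compat; [nra | apply pow_lt; lra].
Qed.

Lemma sinh_sub_id_le_of_cosh_sub_1_le l u v : 0 <= l -> 0 < u <= v ->
  l * (cosh u - 1) <= cosh v - 1 -> l * (sinh u - u) <= sinh v - v.
Proof.
  intros Hl Huv Hcosh.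
  pose proof (sinh_sub_id_div_cosh_sub_1_le u v Huv) as Hratio.
  pose proof (cosh_sub_1_pos u ltac:(lra)). pose proof (cosh_sub_1_pos v ltac:(lra)).
  pose proof (id_le_sinh u ltac:(lra)).
  set (qu := (sinh u - u) / (cosh u - 1)) in Hratio.
  set (qv := (sinh v - v) / (cosh v - 1)) in Hratio.
  assert (Eu : sinh u - u = qu * (cosh u - 1)) by (unfold qu; field; lra).
  assert (Ev : sinh v - v = qv * (cosh v - 1)) by (unfold qv; field; lra).
  assert (0 <= qu) by (apply Rdiv_le_0_compat; lra).
  rewrite Eu, Ev. apply Rle_trans with (qu * (cosh v - 1)).
  - rewrite <- Rmult_assoc, (Rmult_comm l), Rmult_assoc. now apply Rmult_le_compat_l.
  - apply Rmult_le_compat_r; lra.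
Qed.

Lemma lt_sinh_of_cosh_sub_1_gt m u v : 0 <= m -> 0 <= u -> 0 <= v ->
  m ^ 2 * (cosh u - 1) < cosh v - 1 -> m * u < sinh v.
Proof.
  intros Hm Hu Hv Hlt.
  pose proof (sqr_div_2_le_cosh_sub_1 u Hu). pose proof (cosh_ge_1 v).
  pose proof (cosh_sqr_sub_sinh_sqr v). pose proof (sinh_nonneg v Hv).
  assert (Hsq : (m * u) ^ 2 < sinh v ^ 2) by nra.
  destruct (Rlt_or_le (m * u) (sinh v)) as [| Hge]; [easy |].
  assert (0 <= m * u) by nra. nra.
Qed.

Lemma sinh_sub_mul_id_ge k u : 0 <= k <= 1 -> 0 <= u ->
  ((1 - k) * sinh u + (sinh u - u)) / 2 <= sinh u - k * u.
Proof. intros Hk Hu. pose proof (id_le_sinh u Hu). nra. Qed.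

Lemma sinh_sub_mul_id_gap C k1 k2 u1 u2 : 1 <= C -> 0 <= k1 < 1 -> 0 <= u1 -> 0 < u2 ->
  1 - k2 <= C * (1 - k1) ->
  4 * C ^ 4 * (cosh u2 - 1) < cosh u1 - 1 ->
  C * (sinh u2 - k2 * u2) < sinh u1 - k1 * u1.
Proof.
  intros HC Hk1 Hu1 Hu2 Hk Hcosh.
  assert (HC4 : C <= 2 * C ^ 4).
  { assert (1 <= C ^ 3) by (rewrite <- (pow1 3); apply pow_incr; lra). simpl in *. nra. }
  pose proof (cosh_sub_1_pos u2 Hu2).
  assert (Hu12 : u2 <= u1).
  { destruct (Rle_or_lt u2 u1) as [| Hlt]; [easy |].
    pose proof (cosh_le u1 u2 ltac:(lra)). nra. }
  assert (Hsinh : 2 * C ^ 2 * u2 < sinh u1).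
  { apply (lt_sinh_of_cosh_sub_1_gt (2 * C ^ 2)); [| lra | lra |].
    - pose proof (pow_le C 2 ltac:(lra)). lra.
    - replace ((2 * C ^ 2) ^ 2) with (4 * C ^ 4) by ring. lra. }
  assert (Hexcess : 4 * C ^ 4 * (sinh u2 - u2) <= sinh u1 - u1).
  { apply sinh_sub_id_le_of_cosh_sub_1_le; [| lra | lra].
    pose proof (pow_le C 4 ltac:(lra)). lra. }
  pose proof (sinh_sub_mul_id_ge k1 u1 ltac:(lra) Hu1).
  pose proof (id_le_sinh u2 ltac:(lra)).
  assert (C * ((1 - k2) * u2) <= C ^ 2 * (1 - k1) * u2).
  { replace (C ^ 2 * (1 - k1) * u2) with (C * (C * (1 - k1) * u2)) by ring.
    apply Rmult_le_compat_l; [lra |]. apply Rmult_le_compat_r; lra. }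
  assert ((1 - k1) * (2 * C ^ 2 * u2) < (1 - k1) * sinh u1)
    by (apply Rmult_lt_compat_l; lra).
  assert (C * (sinh u2 - u2) <= 2 * C ^ 4 * (sinh u2 - u2))
    by (apply Rmult_le_compat_r; lra).
  lra.
Qed.

Definition arcosh x := ln (x + sqrt (x ^ 2 - 1)).

Lemma arcosh_nonneg x : 1 <= x -> 0 <= arcosh x.
Proof.
  intros Hx. unfold arcosh. rewrite <- ln_1. apply ln_le; [lra |].
  pose proof (sqrt_pos (x ^ 2 - 1)). lra.
Qed.

Lemma cosh_arcosh x : 1 <= x -> cosh (arcosh x) = x.
Proof.
  intros Hx. unfold cosh, arcosh.
  set (r := sqrt (x ^ 2 - 1)).
  assert (Hr : r ^ 2 = x ^ 2 - 1) by (apply pow2_sqrt; nra).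
  assert (0 <= r) by apply sqrt_pos.
  assert (Hinv : / (x + r) = x - r).
  { apply (Rmult_eq_reg_l (x + r)); [rewrite Rinv_r by lra; nra | lra]. }
  rewrite exp_Ropp, exp_ln, Hinv by lra. field.
Qed.

Lemma G_cosh k u : 0 <= u -> G k (cosh u) = sinh u - k * u.
Proof.
  intros Hu. unfold G.
  replace (cosh u ^ 2 - 1) with (sinh u ^ 2) by (pose proof (cosh_sqr_sub_sinh_sqr u); lra).
  rewrite sqrt_pow2 by (now apply sinh_nonneg).
  replace (cosh u + sinh u) with (exp u) by (unfold cosh, sinh; field).
  now rewrite ln_exp.
Qed.

Lemma exists_sinh_sub_mul_eq k y : k < 1 -> 0 <= y ->
  exists u, 0 <= u /\ sinh u - k * u = y.
Proof.
  intros Hk Hy.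
  (* at M, sinh M - k M >= (1 - k) M = y + (1 - k) *)
  set (M := y / (1 - k) + 1).
  assert (HM : 0 < M) by (unfold M; assert (0 <= y / (1 - k)) by (apply Rdiv_le_0_compat; lra); lra).
  assert (HyM : y <= sinh M - k * M).
  { pose proof (id_le_sinh M ltac:(lra)).
    assert ((1 - k) * M = y + (1 - k)) by (unfold M; field; lra). nra. }
  destruct (IVT_gen (fun t => sinh t - k * t) 0 M y) as [u [Hu Heq]].
  - intros t. apply continuity_pt_filterlim, (ex_derive_continuous (fun t => sinh t - k * t)).
    auto_derive. easy.
  - rewrite sinh_0, Rmin_left, Rmax_right; lra.
  - exists u. rewrite Rmin_left, Rmax_right in Hu by lra. split; [lra | exact Heq].
Qed.

Lemma H_cosh k y : k < 1 -> 0 < y ->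
  exists u, 0 < u /\ H k y = cosh u /\ sinh u - k * u = y.
Proof.
  intros Hk Hy.
  assert (Hex : exists x, 1 <= x /\ G k x = y).
  { destruct (exists_sinh_sub_mul_eq k y Hk ltac:(lra)) as [u [Hu Heq]].
    exists (cosh u). split; [apply cosh_ge_1 | now rewrite G_cosh]. }
  (* H k y is just some preimage chosen by epsilon. *)
  destruct (epsilon_spec (inhabits 1) (fun x => 1 <= x /\ G k x = y) Hex) as [H1 HG].
  fold (H k y) in H1, HG.
  pose proof (arcosh_nonneg (H k y) H1) as Hu.
  set (u := arcosh (H k y)) in Hu.
  assert (Hc : cosh u = H k y) by now apply cosh_arcosh.
  rewrite <- Hc, G_cosh in HG by easy.
  exists u. split; [| split; easy].
  destruct Hu as [| Hu0]; [easy |].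
  rewrite <- Hu0, sinh_0 in HG. lra.
Qed.

Lemma div_bounds_iff C a b : 0 < C -> 0 < b ->
  / C <= a / b <= C <-> b <= C * a /\ a <= C * b.
Proof.
  intros HC Hb.
  assert (Hmul : forall m s t, 0 < m -> s <= t <-> s * m <= t * m)
    by (intros; split; intros; [apply Rmult_le_compat_r | apply (Rmult_le_reg_r m)]; lra).
  replace a with (a / b * b) at 3 4 by (field; lra).
  rewrite (Hmul C (/ C)), Rinv_l, (Hmul b 1), (Hmul b (a / b) C) by lra.
  replace (a / b * C * b) with (C * (a / b * b)) by ring. lra.
Qed.

Theorem lemma2p11 (C0 : R) (HC0 : 1 <= C0) :
  exists C1 : R, 1 <= C1 /\
    forall x1 x2 k1 k2 : R,
      0 < x1 -> 0 < x2 -> 0 < k1 < 1 -> 0 < k2 < 1 ->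
      / C0 <= x1 / x2 <= C0 ->
      / C0 <= k1 / k2 <= C0 ->
      / C0 <= (1 - k1) / (1 - k2) <= C0 ->
      / C1 <= (H k1 x1 - 1) / (H k2 x2 - 1) <= C1.
Proof.
  assert (HL : 1 <= 4 * C0 ^ 4).
  { assert (1 <= C0 ^ 4) by (rewrite <- (pow1 4); apply pow_incr; lra). lra. }
  exists (4 * C0 ^ 4). split; [exact HL |].
  intros x1 x2 k1 k2 Hx1 Hx2 Hk1 Hk2 Hx _ Hs.
  destruct (H_cosh k1 x1 ltac:(lra) Hx1) as [u1 [Hu1 [-> Hy1]]].
  destruct (H_cosh k2 x2 ltac:(lra) Hx2) as [u2 [Hu2 [-> Hy2]]].
  apply div_bounds_iff in Hx as [Hx21 Hx12]; [| lra | lra].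
  apply div_bounds_iff in Hs as [Hs21 Hs12]; [| lra | lra].
  apply div_bounds_iff; [lra | now apply cosh_sub_1_pos |].
  split; apply Rnot_lt_le; intros Hgap.
  - apply (sinh_sub_mul_id_gap C0 k2 k1 u2 u1) in Hgap; [| lra ..].
    rewrite Hy1, Hy2 in Hgap. lra.
  - apply (sinh_sub_mul_id_gap C0 k1 k2 u1 u2) in Hgap; [| lra ..].
    rewrite Hy1, Hy2 in Hgap. lra.
Qed.
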